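(* Let $M$ be a $\lambda$-term, $V$ a value and $x$ a variable. Then $$\mathcal T(M\{x:=V\})=\bigcup_{t\in\mathcal T(M)}\ \bigcup_{[v_1,\dots,v_n]\in\mathcal T(V)} t\langle x:=v_1,\dots,v_n\rangle.$$
   Context: $\lambda$-terms and values are $M::=V\mid MN$, $V::=x\mid\lambda x.M$, up to $\alpha$-conversion; $M\{x:=V\}$ is capture-avoiding substitution. Resource calculus: resource values $v::=x\mid\lambda x.t$; simple terms $s,t::=st\mid[v_1,\dots,v_k]$ ($k\ge0$, bags are finite multisets); $[x^n]$ is $n$ copies of $x$. Linear substitution: if $x$ has exactly $n$ free occurrences in $e$, enumerated $x_1,\dots,x_n$, then $e\langle x:=v_1,\dots,v_n\rangle=\{e[x_1:=v_{\pi(1)},\dots,x_n:=v_{\pi(n)}]\mid\pi\text{ a permutation of }\{1,\dots,n\}\}$ (replacing the $i$-th occurrence by $v_{\pi(i)}$); otherwise it is $\emptyset$. Taylor expansion: $\mathcal T(x)=\{[x^n]\mid n\ge0\}$, $\mathcal T(\lambda x.N)=\{[\lambda x.t_1,\dots,\lambda x.t_n]\mid n\ge0,\ t_i\in\mathcal T(N)\}$, $\mathcal T(PQ)=\{st\mid s\in\mathcal T(P),t\in\mathcal T(Q)\}$. *)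

(* Terms are represented with de Bruijn indices (this is the
   standard rendering of terms "up to alpha-conversion"); bags are lists,
   and sets of simple terms are compared modulo bag reordering (req_t). *)
From Stdlib Require Import List Permutation Arith.
Import ListNotations.

Inductive lterm : Type :=
| Var : nat -> lterm
| Lam : lterm -> lterm
| App : lterm -> lterm -> lterm.

Definition is_value (M : lterm) : Prop :=
  match M with Var _ | Lam _ => True | App _ _ => False end.

Fixpoint lshift (c : nat) (M : lterm) : lterm :=
  match M with
  | Var y => Var (if c <=? y then S y else y)
  | Lam N => Lam (lshift (S c) N)
  | App P Q => App (lshift c P) (lshift c Q)
  end.

Fixpoint lsubst (x : nat) (V : lterm) (M : lterm) : lterm :=
  match M with
  | Var y => if Nat.eqb y x then V else Var y
  | Lam N => Lam (lsubst (S x) (lshift 0 V) N)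
  | App P Q => App (lsubst x V P) (lsubst x V Q)
  end.

Inductive rterm : Type :=
| RApp : rterm -> rterm -> rterm
| RBag : list rval -> rterm
with rval : Type :=
| RVar : nat -> rval
| RLam : rterm -> rval.

Fixpoint rshift_t (c : nat) (t : rterm) : rterm :=
  match t with
  | RApp s u => RApp (rshift_t c s) (rshift_t c u)
  | RBag b => RBag (map (rshift_v c) b)
  end
with rshift_v (c : nat) (v : rval) : rval :=
  match v with
  | RVar y => RVar (if c <=? y then S y else y)
  | RLam t => RLam (rshift_t (S c) t)
  end.

Inductive req_t : rterm -> rterm -> Prop :=
| req_app s s' t t' : req_t s s' -> req_t t t' -> req_t (RApp s t) (RApp s' t')
| req_bag b b' c : Permutation b b' -> req_b b' c -> req_t (RBag b) (RBag c)
with req_b : list rval -> list rval -> Prop :=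
| reqb_nil : req_b [] []
| reqb_cons v v' b b' : req_v v v' -> req_b b b' -> req_b (v :: b) (v' :: b')
with req_v : rval -> rval -> Prop :=
| reqv_var y : req_v (RVar y) (RVar y)
| reqv_lam t t' : req_t t t' -> req_v (RLam t) (RLam t').

Definition set_eq_mod (A B : rterm -> Prop) : Prop :=
  forall s, (exists s', req_t s s' /\ A s') <-> (exists s', req_t s s' /\ B s').

(* LS_t k vs e e' : e' is e with its free occurrences of variable k,
   enumerated left to right, replaced respectively by vs = [v_1;...;v_n]
   (in order); the list must have exactly as many entries as occurrences. *)
Inductive LS_t : nat -> list rval -> rterm -> rterm -> Prop :=
| ls_app k vs1 vs2 s s' t t' :
    LS_t k vs1 s s' -> LS_t k vs2 t t' -> LS_t k (vs1 ++ vs2) (RApp s t) (RApp s' t')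
| ls_bag k vs b b' : LS_b k vs b b' -> LS_t k vs (RBag b) (RBag b')
with LS_b : nat -> list rval -> list rval -> list rval -> Prop :=
| lsb_nil k : LS_b k [] [] []
| lsb_cons k vs1 vs2 u u' b b' :
    LS_v k vs1 u u' -> LS_b k vs2 b b' -> LS_b k (vs1 ++ vs2) (u :: b) (u' :: b')
with LS_v : nat -> list rval -> rval -> rval -> Prop :=
| lsv_hit k v : LS_v k [v] (RVar k) v
| lsv_var k y : y <> k -> LS_v k [] (RVar y) (RVar y)
| lsv_lam k vs t t' :
    LS_t (S k) (map (rshift_v 0) vs) t t' -> LS_v k vs (RLam t) (RLam t').

(* e<x := v_1,...,v_n> = { e[x_1:=v_pi(1),...,x_n:=v_pi(n)] | pi permutation } *)
Definition lin_subst (e : rterm) (x : nat) (vs : list rval) : rterm -> Prop :=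
  fun e' => exists vs', Permutation vs vs' /\ LS_t x vs' e e'.

Fixpoint taylor (M : lterm) : rterm -> Prop :=
  match M with
  | Var y => fun s => exists n, s = RBag (repeat (RVar y) n)
  | Lam N => fun s => exists ts, Forall (taylor N) ts /\ s = RBag (map RLam ts)
  | App P Q => fun s => exists s1 t1, s = RApp s1 t1 /\ taylor P s1 /\ taylor Q t1
  end.

(* A value V expands into bags whose elements range independently over the
   singletons of T(V), so T(V) is closed under concatenation and splitting of
   bags.  Hence substituting, in t in T(M), the n occurrences of x by the n
   entries of a bag of T(V) is the same as substituting each occurrence by a
   singleton of T(V) independently; by induction on M this is exactly
   T(M{x:=V}), shifting V under binders.  Permuting the bag is harmless since
   T(V) is closed under permutations. *)
From Stdlib Require Import List Permutation Arith.
Import ListNotations.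

Lemma Forall_image {A B} (P : A -> Prop) (Q : B -> Prop) (f : A -> B) :
  (forall b, Q b <-> exists a, P a /\ b = f a) ->
  forall l, Forall Q l <-> exists l0, Forall P l0 /\ l = map f l0.
Proof.
  intros HQ l; induction l as [|b l IH]; split.
  - exists []; auto.
  - constructor.
  - intros [Hb Hl]%Forall_cons_iff.
    apply HQ in Hb as [a [Ha ->]]; apply IH in Hl as [l0 [Hl0 ->]].
    exists (a :: l0); auto.
  - intros [[|a l0] [Hl0 [=-> ->]]]; inversion_clear Hl0.
    constructor; [apply HQ; eauto | apply IH; eauto].
Qed.

Lemma Forall_exists_Forall2 {A B} (P : A -> Prop) (R : A -> B -> Prop) l' :
  Forall (fun b => exists a, P a /\ R a b) l' <-> exists l, Forall P l /\ Forall2 R l l'.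
Proof.
  induction l' as [|b l' IH]; split.
  - exists []; auto.
  - constructor.
  - intros [[a [Ha Hab]] Hl']%Forall_cons_iff.
    apply IH in Hl' as [l [Hl Hll']]; exists (a :: l); auto.
  - intros [l [Hl Hll']]; inversion Hll'; subst; inversion_clear Hl.
    constructor; [eauto | apply IH; eauto].
Qed.

Lemma taylor_var_singleton y v : taylor (Var y) (RBag [v]) <-> v = RVar y.
Proof.
  split.
  - intros [[|[|n]] Hn]; simpl in Hn; congruence.
  - intros ->; exists 1; reflexivity.
Qed.

Lemma taylor_lam_singleton N v :
  taylor (Lam N) (RBag [v]) <-> exists t, v = RLam t /\ taylor N t.
Proof.
  split.
  - intros [[|t [|]] [Hts Hv]]; simpl in Hv; try discriminate.
    injection Hv as ->; inversion_clear Hts; eauto.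
  - intros [t [-> Ht]]; exists [t]; auto.
Qed.

Lemma taylor_bag_nil V : is_value V -> taylor V (RBag []).
Proof. destruct V; simpl; try contradiction; intros _; [exists 0 | exists []]; auto. Qed.

Lemma taylor_bag_app M a b :
  taylor M (RBag (a ++ b)) <-> taylor M (RBag a) /\ taylor M (RBag b).
Proof.
  destruct M as [y|N|P Q]; simpl; split.
  - intros [n Hn]; injection Hn as Hn.
    apply eq_sym, repeat_eq_app in Hn as [Ha Hb].
    split; [exists (length a) | exists (length b)]; congruence.
  - intros [[n [=->]] [m [=->]]]; exists (n + m); rewrite repeat_app; reflexivity.
  - intros [ts [Hts Hab]]; injection Hab as Hab.
    apply eq_sym, map_eq_app in Hab as [ta [tb [-> [<- <-]]]].
    apply Forall_app in Hts as [Hta Htb].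
    split; [exists ta | exists tb]; auto.
  - intros [[ta [Hta [=->]]] [tb [Htb [=->]]]].
    exists (ta ++ tb); rewrite map_app; split; [apply Forall_app|]; auto.
  - intros (? & ? & [=] & _).
  - intros [(? & ? & [=] & _) _].
Qed.

Lemma taylor_value_iff V s : is_value V ->
  taylor V s <-> exists vs, s = RBag vs /\ Forall (fun v => taylor V (RBag [v])) vs.
Proof.
  intros HV; split.
  - intros Hs.
    assert (Hbag : exists vs, s = RBag vs).
    { destruct V as [y|N|]; simpl in *; try contradiction.
      - destruct Hs as [n ->]; eauto.
      - destruct Hs as [ts [_ ->]]; eauto. }
    destruct Hbag as [vs ->]; exists vs; split; auto.
    induction vs as [|v vs IH]; constructor;
      apply (taylor_bag_app V [v] vs) in Hs as [Hv Hvs]; auto.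
  - intros [vs [-> Hvs]]; induction Hvs as [|v vs Hv _ IH].
    + apply taylor_bag_nil; assumption.
    + apply (taylor_bag_app V [v] vs); auto.
Qed.

Lemma taylor_bag_perm M a b :
  Permutation a b -> taylor M (RBag a) -> taylor M (RBag b).
Proof.
  intros Hab Ha.
  assert (HM : is_value M) by (destruct M; simpl in *; auto; destruct Ha as (? & ? & [=] & _)).
  apply taylor_value_iff in Ha as [vs [[=<-] Hvs]]; auto.
  apply taylor_value_iff; auto; exists b; split; auto.
  eapply Permutation_Forall; eauto.
Qed.

Lemma taylor_lshift M c s' :
  taylor (lshift c M) s' <-> exists s, taylor M s /\ s' = rshift_t c s.
Proof.
  revert c s'; induction M as [y|N IH|P IHP Q IHQ]; intros c s'; simpl.
  - split.
    + intros [n ->]; exists (RBag (repeat (RVar y) n)); simpl.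
      rewrite map_repeat; eauto.
    + intros [s [[n ->] ->]]; exists n; simpl; rewrite map_repeat; reflexivity.
  - split.
    + intros [ts' [Hts' ->]].
      apply (Forall_image (taylor N) _ (rshift_t (S c)) (IH (S c))) in Hts'
        as [ts [Hts ->]].
      exists (RBag (map RLam ts)); simpl; rewrite !map_map; eauto.
    + intros [s [[ts [Hts ->]] ->]]; exists (map (rshift_t (S c)) ts); simpl.
      rewrite !map_map; split; [|reflexivity].
      apply (Forall_image (taylor N) _ _ (IH (S c))); eauto.
  - split.
    + intros (s1 & t1 & -> & [s [Hs ->]]%IHP & [t [Ht ->]]%IHQ).
      exists (RApp s t); split; [exists s, t|]; auto.
    + intros [s [(s1 & t1 & -> & Hs1 & Ht1) ->]]; simpl.
      exists (rshift_t c s1), (rshift_t c t1); rewrite IHP, IHQ.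
      split; [|split]; eauto.
Qed.

Lemma taylor_lshift_bag M c ws :
  taylor (lshift c M) (RBag ws) <-> exists vs, taylor M (RBag vs) /\ ws = map (rshift_v c) vs.
Proof.
  rewrite taylor_lshift; split.
  - intros [[|vs] [Hs Hws]]; simpl in Hws; [discriminate|].
    injection Hws as ->; eauto.
  - intros [vs [Hvs ->]]; exists (RBag vs); auto.
Qed.

Definition taylor_LS_t (V : lterm) (x : nat) (t u : rterm) : Prop :=
  exists vs, taylor V (RBag vs) /\ LS_t x vs t u.

Definition taylor_LS_v (V : lterm) (x : nat) (v v' : rval) : Prop :=
  exists vs, taylor V (RBag vs) /\ LS_v x vs v v'.

Lemma taylor_LS_lin_subst V x t u :
  taylor_LS_t V x t u <-> exists vs, taylor V (RBag vs) /\ lin_subst t x vs u.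
Proof.
  split.
  - intros [vs [Hvs Hls]]; exists vs; split; auto; exists vs; auto.
  - intros [vs [Hvs [vs' [Hp Hls]]]]; exists vs'; split; auto.
    eapply taylor_bag_perm; eauto.
Qed.

Lemma taylor_LS_app V x s t u :
  taylor_LS_t V x (RApp s t) u <->
  exists s' t', u = RApp s' t' /\ taylor_LS_t V x s s' /\ taylor_LS_t V x t t'.
Proof.
  split.
  - intros [vs [Hvs Hls]]; inversion Hls; subst.
    apply taylor_bag_app in Hvs as [Hvs1 Hvs2].
    do 2 eexists; split; [reflexivity | split; eexists; eauto].
  - intros (s' & t' & -> & [vs1 [Hvs1 Hls1]] & [vs2 [Hvs2 Hls2]]).
    exists (vs1 ++ vs2); split; [apply taylor_bag_app | constructor]; auto.
Qed.

Lemma taylor_LS_b_Forall2 V x b b' : is_value V ->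
  (exists vs, taylor V (RBag vs) /\ LS_b x vs b b') <-> Forall2 (taylor_LS_v V x) b b'.
Proof.
  intros HV; split.
  - intros [vs [Hvs Hls]]; induction Hls as [|k vs1 vs2 v v' b b' Hv _ IH].
    + constructor.
    + apply taylor_bag_app in Hvs as [Hvs1 Hvs2].
      constructor; [exists vs1 | apply IH]; auto.
  - induction 1 as [|v v' b b' [vs1 [Hvs1 Hv]] _ [vs2 [Hvs2 Hb]]].
    + exists []; split; [apply taylor_bag_nil | constructor]; auto.
    + exists (vs1 ++ vs2); split; [apply taylor_bag_app | constructor]; auto.
Qed.

Lemma taylor_LS_bag V x b u : is_value V ->
  taylor_LS_t V x (RBag b) u <-> exists b', u = RBag b' /\ Forall2 (taylor_LS_v V x) b b'.
Proof.
  intros HV; split.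
  - intros [vs [Hvs Hls]]; inversion Hls; subst.
    eexists; split; [reflexivity | apply taylor_LS_b_Forall2; eauto].
  - intros [b' [-> Hb]]; apply taylor_LS_b_Forall2 in Hb as [vs [Hvs Hls]]; auto.
    exists vs; split; [|constructor]; auto.
Qed.

(* The right-hand side is T(y{x:=V}) read on singletons. *)
Lemma taylor_LS_var V x y v : is_value V ->
  taylor_LS_v V x (RVar y) v <-> taylor (if y =? x then V else Var y) (RBag [v]).
Proof.
  intros HV; destruct (Nat.eqb_spec y x) as [->|Hne]; split.
  - intros [vs [Hvs Hls]]; inversion Hls; subst; [assumption | congruence].
  - intros Hv; exists [v]; split; [assumption | constructor].
  - intros [vs [Hvs Hls]]; inversion Hls; subst; [congruence|].
    apply taylor_var_singleton; reflexivity.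
  - intros ->%taylor_var_singleton.
    exists []; split; [apply taylor_bag_nil | constructor]; auto.
Qed.

Lemma taylor_LS_lam V x t v :
  taylor_LS_v V x (RLam t) v <->
  exists t', v = RLam t' /\ taylor_LS_t (lshift 0 V) (S x) t t'.
Proof.
  split.
  - intros [vs [Hvs Hls]]; inversion Hls; subst.
    eexists; split; [reflexivity|].
    eexists; split; [apply taylor_lshift_bag|]; eauto.
  - intros (t' & -> & ws & [vs [Hvs ->]]%taylor_lshift_bag & Hls).
    exists vs; split; [|constructor]; auto.
Qed.

Lemma taylor_LS_of_singletons V x W W' :
  is_value V -> is_value W -> is_value W' ->
  (forall v', taylor W' (RBag [v']) <->
              exists v, taylor W (RBag [v]) /\ taylor_LS_v V x v v') ->
  forall u, taylor W' u <-> exists t, taylor W t /\ taylor_LS_t V x t u.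
Proof.
  intros HV HW HW' Hsing u; rewrite (taylor_value_iff W' u HW'); split.
  - intros [b' [-> Hb']].
    apply (Forall_impl _ (fun v' => proj1 (Hsing v'))), Forall_exists_Forall2
      in Hb' as [b [Hb Hbb']].
    exists (RBag b); split.
    + apply taylor_value_iff; eauto.
    + apply taylor_LS_bag; eauto.
  - intros [t [Ht Htu]].
    apply taylor_value_iff in Ht as [b [-> Hb]]; auto.
    apply taylor_LS_bag in Htu as [b' [-> Hbb']]; auto.
    exists b'; split; auto.
    apply (Forall_impl _ (fun v' => proj2 (Hsing v'))), Forall_exists_Forall2; eauto.
Qed.

Lemma taylor_lsubst M x V u : is_value V ->
  taylor (lsubst x V M) u <-> exists t, taylor M t /\ taylor_LS_t V x t u.
Proof.
  revert x V u; induction M as [y|N IH|P IHP Q IHQ]; intros x V u HV.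
  - apply (taylor_LS_of_singletons V x (Var y)); simpl; auto.
    + destruct (y =? x); simpl; auto.
    + intros v'; split.
      * exists (RVar y); split; [apply taylor_var_singleton | apply taylor_LS_var]; auto.
      * intros [v [->%taylor_var_singleton Hv]]; apply taylor_LS_var in Hv; auto.
  - assert (HV' : is_value (lshift 0 V)) by (destruct V; simpl; auto).
    apply (taylor_LS_of_singletons V x (Lam N) (Lam (lsubst (S x) (lshift 0 V) N)));
      [assumption | exact I | exact I |].
    intros v'; rewrite taylor_lam_singleton; split.
    + intros (t' & -> & [t [Ht Htt']]%IH); auto.
      exists (RLam t); split; [apply taylor_lam_singleton; eauto|].
      apply taylor_LS_lam; eauto.
    + intros (v & [t [-> Ht]]%taylor_lam_singleton & (t' & -> & Htt')%taylor_LS_lam).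
      exists t'; split; [|apply IH]; eauto.
  - simpl; split.
    + intros (s1 & t1 & -> & [s [Hs Hss1]]%IHP & [t [Ht Htt1]]%IHQ); auto.
      exists (RApp s t); split; [exists s, t; auto|].
      apply taylor_LS_app; eauto 6.
    + intros (r & (s & t & -> & Hs & Ht) & (s1 & t1 & -> & Hss1 & Htt1)%taylor_LS_app).
      exists s1, t1; rewrite IHP, IHQ by assumption.
      split; [reflexivity | split; eauto].
Qed.

Theorem lemma4p3 (M V : lterm) (x : nat) (HV : is_value V) :
  set_eq_mod (taylor (lsubst x V M))
    (fun u => exists t vs, taylor M t /\ taylor V (RBag vs) /\ lin_subst t x vs u).
Proof.
  assert (Hpt : forall u, taylor (lsubst x V M) u <->
            exists t vs, taylor M t /\ taylor V (RBag vs) /\ lin_subst t x vs u).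
  { intros u; rewrite taylor_lsubst by assumption; split.
    - intros [t [Ht [vs [Hvs Hls]]%taylor_LS_lin_subst]]; eauto.
    - intros (t & vs & Ht & Hvs & Hls); exists t; split; auto.
      apply taylor_LS_lin_subst; eauto. }
  intros s; split; intros [s' [Hss' Hs']]; exists s'; split; auto; apply Hpt; auto.
Qed.
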